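(* Consider the ring $S=\mathbb{F}_{p^m}[x]/\langle x^{4p^s}-\alpha\rangle$. Then: (a) $S$ has exactly two maximal ideals, $\langle x^2+\gamma x+\frac{\gamma^2}{2}\rangle$ and $\langle x^2-\gamma x+\frac{\gamma^2}{2}\rangle$; (b) the ideals of $S$ are exactly $\left\langle \left(x^2+\gamma x+\frac{\gamma^2}{2}\right)^i\left(x^2-\gamma x+\frac{\gamma^2}{2}\right)^j\right\rangle$ with $0\le i,j\le p^s$, and such an ideal has $p^{m(4p^s-2i-2j)}$ elements; (c) the set of nilpotent elements of $S$ is $\langle x^4-\alpha_0\rangle$; (d) the set of non-units of $S$ is $\langle x^2+\gamma x+\frac{\gamma^2}{2}\rangle\cup\langle x^2-\gamma x+\frac{\gamma^2}{2}\rangle$.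
   Context: Let $p$ be an odd prime and $m,s$ positive integers with $p^m\equiv 3\pmod 4$; $\mathbb{F}_{p^m}$ is the field with $p^m$ elements. Fix $\alpha\in\mathbb{F}_{p^m}\setminus\{0\}$ that is not a square in $\mathbb{F}_{p^m}$, let $\alpha_0\in\mathbb{F}_{p^m}$ satisfy $\alpha_0^{p^s}=\alpha$, and let $\gamma\in\mathbb{F}_{p^m}$ satisfy $\gamma^4+4\alpha_0=0$. *)

From HB Require Import structures.
From mathcomp Require Import all_boot all_order all_algebra.
From mathcomp Require Import qpoly.
Set Implicit Arguments. Unset Strict Implicit. Unset Printing Implicit Defensive.
Import Order.TTheory GRing.Theory Num.Theory.
Local Open Scope ring_scope.

(* An ideal of a finite commutative ring R, as a subset of R
   (the whole ring is allowed; cf. ring_quotient.idealr_closed which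
   additionally requires properness). *)
Definition is_ideal (R : finComNzRingType) (I : {set R}) : Prop :=
  0 \in I /\ forall a u v, u \in I -> v \in I -> a * u + v \in I.

Definition is_maximal_ideal (R : finComNzRingType) (I : {set R}) : Prop :=
  is_ideal I /\ 1 \notin I /\
  forall J : {set R}, is_ideal J -> I \subset J -> J = I \/ J = [set: R].

(* {poly %/ h} is definitionally {poly_n R}, which is finite over a
   finite ring; expose the finite structure on the quotient ring. *)
Definition fqpoly (F : finFieldType) (h : {poly F}) := {poly %/ h}.
HB.instance Definition _ (F : finFieldType) (h : {poly F}) :=
  GRing.ComUnitAlgebra.on (fqpoly h).
HB.instance Definition _ (F : finFieldType) (h : {poly F}) :=
  Finite.on (fqpoly h).

Definition pideal (R : finComNzRingType) (a : R) : {set R} :=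
  [set a * r | r : R].

Definition nilpotent (R : nzRingType) (x : R) : Prop :=
  exists n : nat, x ^+ n = 0.

Definition modpoly (F : fieldType) (p s : nat) (alpha : F) : {poly F} :=
  'X^(4 * p ^ s) - alpha%:P.

From HB Require Import structures.
From mathcomp Require Import all_boot all_order all_algebra.
From mathcomp Require Import qpoly finfield ring zify.
Set Implicit Arguments. Unset Strict Implicit. Unset Printing Implicit Defensive.
Import Order.TTheory GRing.Theory Num.Theory.
Local Open Scope ring_scope.

(* Since F has characteristic p, x^(4p^s) - alpha = (x^4 - alpha0)^(p^s), and
   x^4 - alpha0 = g1 g2 with g1, g2 = x^2 +- gamma x + gamma^2/2.  A root of
   g1 or g2 would produce a square root of -1, which does not exist when
   |F| = 3 mod 4; so g1, g2 are irreducible, and they are coprime.  Ideals of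
   F[x]/<f> are generated by the divisors of f, here the g1^i g2^j with
   0 <= i, j <= p^s, and <d> has |F|^(deg f - deg d) elements.  The maximal
   ideals, the nilradical <g1 g2> and the non-units are read off this lattice. *)

Lemma pideal_is_ideal (R : finComNzRingType) (a : R) : is_ideal (pideal a).
Proof.
split; first by apply/imsetP; exists 0; rewrite ?mulr0.
move=> b _ _ /imsetP[u _ ->] /imsetP[v _ ->].
by apply/imsetP; exists (b * u + v); rewrite // mulrDr mulrCA.
Qed.

Lemma pideal1 (R : finComNzRingType) : pideal (1 : R) = [set: R].
Proof. by apply/setP => z; rewrite inE; apply/imsetP; exists z; rewrite ?mul1r. Qed.

Section QuotientRing.

Variables (F : finFieldType) (f : {poly F}).
Hypotheses (f_monic : f \is monic) (size_f_gt1 : (1 < size f)%N).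
Local Notation S := (fqpoly f).

Lemma mk_monicE : mk_monic f = f.
Proof. by rewrite /mk_monic size_f_gt1 f_monic. Qed.

Lemma val_in_qpoly (q : {poly F}) : val (in_qpoly f q : S) = q %% f.
Proof. by rewrite /= mk_monicE Pdiv.IdomainMonic.modpE. Qed.

Lemma size_val_qpoly (z : S) : (size (val z) < size f)%N.
Proof. by rewrite -[in X in (_ < X)%N]mk_monicE size_mk_monic. Qed.

Lemma in_qpoly_val (z : S) : in_qpoly f (val z) = z.
Proof. by apply: val_inj; rewrite val_in_qpoly modp_small ?size_val_qpoly. Qed.

Lemma val_qpolyX (z : S) n : val (z ^+ n) = val z ^+ n %% f.
Proof. by rewrite -{1}[z]in_qpoly_val -rmorphXn val_in_qpoly. Qed.

Lemma in_qpoly_dvdp (q : {poly F}) : f %| q -> in_qpoly f q = 0 :> S.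
Proof. by move=> /modp_eq0P fq; apply: val_inj; rewrite val_in_qpoly fq. Qed.

Lemma mem_pideal_qpoly (d : {poly F}) (z : S) :
  d %| f -> (z \in pideal (in_qpoly f d : S)) = (d %| val z).
Proof.
move=> df; apply/imsetP/idP => [[r _ ->]|dz].
  by rewrite val_in_qpoly -dvdp_mod // dvdp_mulr // val_in_qpoly -dvdp_mod.
exists (in_qpoly f (val z %/ d)) => //.
by rewrite -in_qpolyM mulrC divpK // in_qpoly_val.
Qed.

Lemma subset_pideal_qpoly (d e : {poly F}) : d %| f -> e %| f ->
  (pideal (in_qpoly f d : S) \subset pideal (in_qpoly f e : S)) = (e %| d).
Proof.
move=> df ef; apply/subsetP/idP => [sde|ed z].
  have := sde (in_qpoly f d); rewrite !mem_pideal_qpoly // val_in_qpoly.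
  by rewrite -!dvdp_mod // dvdpp; apply.
by rewrite !mem_pideal_qpoly // => /(dvdp_trans ed).
Qed.

Lemma qpoly_unitE (z : S) : (z \is a GRing.unit) = coprimep f (val z).
Proof.
have coprime_mk_monic q : coprimep (mk_monic f) q = coprimep f q.
  by rewrite mk_monicE.
by rewrite -coprime_mk_monic.
Qed.

(* A nonzero polynomial of minimal size among those whose class lies in [I]
   divides every such polynomial; [f] itself belongs to that set. *)
Lemma ideal_qpoly_principal (I : {set S}) :
  is_ideal I -> exists2 d, d %| f & I = pideal (in_qpoly f d : S).
Proof.
case=> I0 I_lin.
have IM a z : z \in I -> a * z \in I by move=> zI; rewrite -[_ * _]addr0 I_lin.
pose inI (q : {poly_(size f) F}) := (q != 0 :> {poly F}) && (in_qpoly f q \in I).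
have inIf : inI (npolyp (size f) f).
  by rewrite /inI npolypK // -size_poly_gt0 (ltn_trans _ size_f_gt1) //= in_qpoly_dvdp.
case: (arg_minnP (fun q : {poly_(size f) F} => size (q : {poly F})) inIf).
move=> dn /andP[]; set d : {poly F} := polyn dn => d0 dI dmin.
have d_dvd q : in_qpoly f q \in I -> d %| q.
  move=> qI; apply/modp_eq0P/eqP/contraT => r0.
  have size_r : (size (q %% d)%R <= size f)%N.
    by rewrite ltnW // (leq_trans _ (size_npoly dn)) // ltn_modp.
  have rI : in_qpoly f (q %% d) \in I.
    have -> : q %% d = - (q %/ d) * d + q.
      by rewrite {3}(divp_eq q d) mulNr addKr.
    by rewrite in_qpolyD in_qpolyM I_lin.
  have := dmin (npolyp (size f) (q %% d)); rewrite /inI npolypK // r0 rI.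
  by rewrite leqNgt ltn_modp d0 => /(_ isT).
have df : d %| f by apply: d_dvd; rewrite in_qpoly_dvdp.
exists d => //.
apply/setP => z; rewrite mem_pideal_qpoly //.
apply/idP/idP => [zI|dz]; first by rewrite d_dvd ?in_qpoly_val.
by rewrite -[z]in_qpoly_val -(divpK dz) in_qpolyM IM.
Qed.

Lemma card_pideal_qpoly (d : {poly F}) : d %| f ->
  #|pideal (in_qpoly f d : S)| = (#|F| ^ (size f - size d))%N.
Proof.
move=> df.
have f0 : f != 0 by rewrite -size_poly_gt0 (ltn_trans _ size_f_gt1).
have d0 : d != 0 by apply: contraNneq f0 => d0; move: df; rewrite d0 dvd0p.
have size_df : (size d <= size f)%N := dvdp_leq f0 df.
have size_d_gt0 : (0 < size d)%N by rewrite size_poly_gt0.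
pose mul_d (q : {poly_(size f - size d) F}) : S := in_qpoly f (d * q).
have size_mul_d (q : {poly_(size f - size d) F}) : (size (d * q)%R < size f)%N.
  apply: leq_ltn_trans (size_polyMleq _ _) _; have := size_npoly q; lia.
have mul_d_inj : injective mul_d.
  move=> q1 q2 /(congr1 val); rewrite !val_in_qpoly !modp_small //.
  by move/(mulfI d0)/val_inj.
suff -> : pideal (in_qpoly f d : S) = mul_d @: setT.
  by rewrite card_imset // cardsT card_npoly.
apply/setP => z; rewrite mem_pideal_qpoly //; apply/idP/imsetP => [dz|[q _ ->]].
  have size_quo : (size (val z %/ d)%R <= size f - size d)%N.
    rewrite size_divp //; move: (size_val_qpoly z) size_df size_d_gt0.
    by move: (size f) (size d) (size (val z)); clear; lia.
  exists (npolyp _ (val z %/ d)) => //; apply: val_inj.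
  by rewrite val_in_qpoly npolypK // divpKC // modp_small ?size_val_qpoly.
by rewrite val_in_qpoly modp_small ?dvdp_mulIl.
Qed.

End QuotientRing.

Section IrreducibleFactors.

Variable F : fieldType.
Implicit Types h d g : {poly F}.

Lemma dvdp_Pexp2l h i k : (1 < size h)%N -> (h ^+ i %| h ^+ k) = (i <= k)%N.
Proof.
move=> size_h_gt1; apply/idP/idP; last exact: dvdp_exp2l.
have h0 : h != 0 by rewrite -size_poly_gt0 ltnW.
have size_hX n : size (h ^+ n) = ((size h).-1 * n).+1.
  by rewrite -size_exp prednK // size_poly_gt0 expf_neq0.
move/(dvdp_leq (expf_neq0 k h0)); rewrite !size_hX ltnS leq_pmul2l //.
by rewrite -ltnS prednK // ltnW.
Qed.

Lemma irreducible_dvdp_exp h g n :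
  irreducible_poly h -> h %| g ^+ n -> h %| g.
Proof.
move=> h_irr hg; apply: contraT => h_ndvd_g.
have : coprimep h (g ^+ n) by rewrite coprimep_expr // irreducible_poly_coprime.
by rewrite irreducible_poly_coprime // hg.
Qed.

Lemma dvdp_irreducible_expM_eqp h a d g : irreducible_poly h ->
  d %| h ^+ a * g -> exists2 i, (i <= a)%N & exists2 e, e %| g & d %= h ^+ i * e.
Proof.
move=> h_irr; have h0 : h != 0.
  by case: h_irr => size_h _; rewrite -size_poly_gt0 ltnW.
elim: a d => [|a IHa] d.
  rewrite expr0 mul1r => dg; exists 0%N => //.
  by exists d; rewrite // expr0 mul1r eqpxx.
rewrite exprS -mulrA; have [hd|h_ndvd_d] := boolP (h %| d).
  rewrite -(divpK hd) mulrC dvdp_mul2l // => /IHa[i ia [e eg de]].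
  exists i.+1 => //; exists e => //.
  by rewrite exprS -mulrA eqp_mull.
rewrite Gauss_dvdpr; last by rewrite coprimep_sym irreducible_poly_coprime.
by move=> /IHa[i ia [e eg de]]; exists i; [apply: leqW | exists e].
Qed.

Lemma dvdp_irreducible_exp2_eqp h1 h2 a b d :
  irreducible_poly h1 -> irreducible_poly h2 -> d %| h1 ^+ a * h2 ^+ b ->
  exists i j, [/\ (i <= a)%N, (j <= b)%N & d %= h1 ^+ i * h2 ^+ j].
Proof.
move=> h1_irr h2_irr /(dvdp_irreducible_expM_eqp h1_irr)[i ia [e e_dvd de]].
move: e_dvd; rewrite -[_ ^+ b]mulr1.
move=> /(dvdp_irreducible_expM_eqp h2_irr)[j jb [c c1 ec]].
exists i, j; split => //; apply: eqp_trans de _; apply: eqp_mull.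
apply: eqp_trans ec _; rewrite -[X in _ %= X]mulr1 eqp_mull //.
by rewrite /eqp c1 dvd1p.
Qed.

Lemma dvdp_coprime_expM h1 h2 i j k l :
  coprimep h1 h2 -> (1 < size h1)%N -> (1 < size h2)%N ->
  (h1 ^+ i * h2 ^+ j %| h1 ^+ k * h2 ^+ l) = (i <= k)%N && (j <= l)%N.
Proof.
move=> h12 size_h1 size_h2; apply/idP/andP => [hd|[ik jl]]; last first.
  by rewrite dvdp_mul ?dvdp_exp2l.
have cop_exp m n : coprimep (h1 ^+ m) (h2 ^+ n) by rewrite coprimep_expl ?coprimep_expr.
split.
  have : h1 ^+ i %| h1 ^+ k * h2 ^+ l by apply: dvdp_trans hd; apply: dvdp_mulr.
  by rewrite Gauss_dvdpl ?dvdp_Pexp2l.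
have : h2 ^+ j %| h1 ^+ k * h2 ^+ l by apply: dvdp_trans hd; apply: dvdp_mull.
by rewrite Gauss_dvdpr ?dvdp_Pexp2l // coprimep_sym.
Qed.

End IrreducibleFactors.

Lemma finField_natr2_neq0 (F : finFieldType) : odd #|F| -> (2%:R : F) != 0.
Proof.
apply: contraL => /eqP two0; have pchar2 : 2 \in [pchar F] by rewrite inE two0 eqxx.
have := finNzRing_gt1 F; rewrite (card_pprimeChar pchar2).
by case: logn => // n; rewrite expnS oddM.
Qed.

Lemma finField_sqr_neq_opp1 (F : finFieldType) (b : F) :
  (#|F| %% 4 = 3)%N -> b ^+ 2 != -1.
Proof.
move=> cardF_mod4; apply/eqP => b2.
have cardF : #|F| = (4 * (#|F| %/ 4) + 3)%N.
  by rewrite {1}(divn_eq #|F| 4) cardF_mod4 mulnC.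
have two0 : (2%:R : F) != 0 by rewrite finField_natr2_neq0 // cardF oddD oddM.
have b4 : b ^+ 4 = 1 by rewrite (exprM b 2 2) b2 sqrrN expr1n.
have : b ^+ #|F| = b by rewrite expf_card.
rewrite cardF exprD exprM b4 expr1n mul1r exprSr b2 mulN1r => /eqP.
rewrite eq_sym -addr_eq0 -mulr2n -mulr_natl mulf_eq0 (negPf two0) /= => /eqP b0.
by move: b2; rewrite b0 expr0n /= => /eqP; rewrite eq_sym oppr_eq0 oner_eq0.
Qed.

Definition gpoly (F : fieldType) (u : F) : {poly F} :=
  'X^2 + u *: 'X + (u ^+ 2 / 2%:R)%:P.

Lemma size_gpoly (F : fieldType) (u : F) : size (gpoly u) = 3.
Proof.
rewrite /gpoly -addrA size_polyDl ?size_polyXn //.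
apply: leq_ltn_trans (size_polyD _ _) _; rewrite gtn_max.
rewrite (leq_ltn_trans (size_scale_leq _ _)) ?size_polyX //.
exact: leq_ltn_trans (size_polyC_leq1 _) _.
Qed.

Definition gpow (F : fieldType) (gamma : F) (i j : nat) : {poly F} :=
  gpoly gamma ^+ i * gpoly (- gamma) ^+ j.

Lemma modpoly_frobenius (F : fieldType) (p s : nat) (alpha alpha0 : F) :
  p \in [pchar F] -> alpha0 ^+ (p ^ s) = alpha ->
  ('X^4 - alpha0%:P) ^+ (p ^ s) = modpoly p s alpha.
Proof.
move=> pchar_F alpha0_frob.
have pchar_poly_nat : [pchar {poly F}].-nat (p ^ s)%N.
  by rewrite (eq_pnat _ (@pchar_poly F)) pnatX pnatE ?pchar_F ?(pcharf_prime pchar_F).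
by rewrite exprDn_pchar // exprNn_pchar // -exprM -rmorphXn /= alpha0_frob.
Qed.

Section QuadraticFactors.

Variable F : finFieldType.
Hypothesis card_F_mod4 : (#|F| %% 4 = 3)%N.

Let two_neq0 : (2%:R : F) != 0.
Proof.
by rewrite finField_natr2_neq0 // (divn_eq #|F| 4) card_F_mod4 oddD oddM andbF.
Qed.

Let four_neq0 : (4%:R : F) != 0.
Proof. by rewrite (natrM F 2 2) mulf_neq0. Qed.

(* Completing the square: 4 g(x) = (2x + u)^2 + u^2, so a root would give a
   square root ((2x + u)/u) of -1. *)
Lemma gpoly_irreducible (u : F) : u != 0 -> irreducible_poly (gpoly u).
Proof.
move=> u0; apply: cubic_irreducible => [|x]; first by rewrite size_gpoly.
apply/negP; rewrite /root /gpoly !hornerE /= => /eqP gx0.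
have sq : ((2%:R * x + u) / u) ^+ 2
         = 4%:R * (x ^+ 2 + u * x + u ^+ 2 / 2%:R) / u ^+ 2 - 1.
  by field; rewrite two_neq0 u0.
have := finField_sqr_neq_opp1 ((2%:R * x + u) / u) card_F_mod4.
by rewrite sq gx0 mulr0 mul0r sub0r eqxx.
Qed.

Lemma coprimep_gpolyN (u : F) : u != 0 -> coprimep (gpoly u) (gpoly (- u)).
Proof.
move=> u0; rewrite irreducible_poly_coprime; last exact: gpoly_irreducible.
have u2 : u *+ 2 != 0 by rewrite -mulr_natl mulf_neq0.
have diff : gpoly u - gpoly (- u) = (u *+ 2) *: 'X.
  by rewrite /gpoly sqrrN -!mul_polyC polyCN polyCMn; ring.
have uX0 : (u *+ 2) *: 'X != 0 :> {poly F} by rewrite scaler_eq0 polyX_eq0 orbF.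
apply/negP => /(dvdp_sub (dvdpp (gpoly u))); rewrite diff => /(dvdp_leq uX0).
by rewrite size_scale // size_polyX size_gpoly.
Qed.

Lemma gpoly_mulN (u : F) : gpoly u * gpoly (- u) = 'X^4 + (u ^+ 4 / 4%:R)%:P.
Proof.
rewrite /gpoly sqrrN scaleNr -!mul_polyC.
set C := (u ^+ 2 / 2%:R)%:P; set U := u%:P.
have C2 : C * 2%:R = U ^+ 2.
  by rewrite -polyC_natr -polyCM -rmorphXn; congr _%:P; field.
have CC : C ^+ 2 = (u ^+ 4 / 4%:R)%:P.
  by rewrite -rmorphXn; congr _%:P; field; rewrite four_neq0.
transitivity ('X^4 + (C * 2%:R - U ^+ 2) * 'X^2 + C ^+ 2); first by ring.
by rewrite C2 CC subrr mul0r addr0.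
Qed.

Section ModularRing.

Variables (p s : nat) (alpha alpha0 gamma : F).
Hypothesis pchar_F : p \in [pchar F].
Hypotheses (alpha_neq0 : alpha != 0) (alpha0_frob : alpha0 ^+ (p ^ s) = alpha).
Hypothesis gamma4 : gamma ^+ 4 + 4%:R * alpha0 = 0.

Local Notation N := (p ^ s)%N.
Local Notation f := (modpoly p s alpha).
Local Notation S := (fqpoly f).

Definition gideal (i j : nat) : {set S} := pideal (in_qpoly f (gpow gamma i j) : S).

Let N_gt0 : (0 < N)%N.
Proof. by rewrite expn_gt0 prime_gt0 ?(pcharf_prime pchar_F). Qed.

Let gamma_neq0 : gamma != 0.
Proof.
apply: contraNneq alpha_neq0 => gamma0; move: gamma4.
rewrite gamma0 expr0n add0r => /eqP; rewrite mulf_eq0 (negPf four_neq0) /=.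
by rewrite -alpha0_frob => /eqP->; rewrite expr0n gtn_eqF.
Qed.

Let gpoly_gamma_irr : irreducible_poly (gpoly gamma).
Proof. exact: gpoly_irreducible. Qed.

Let gpoly_Ngamma_irr : irreducible_poly (gpoly (- gamma)).
Proof. by apply: gpoly_irreducible; rewrite oppr_eq0. Qed.

Lemma gpow11 : gpow gamma 1 1 = 'X^4 - alpha0%:P.
Proof.
rewrite /gpow !expr1 gpoly_mulN // -polyCN; congr (_ + _%:P).
apply/(mulIf four_neq0); rewrite divfK // mulNr mulrC.
by apply/eqP; rewrite -addr_eq0 gamma4.
Qed.

Lemma modpoly_gpow : f = gpow gamma N N.
Proof.
by rewrite -(modpoly_frobenius pchar_F alpha0_frob) -gpow11 /gpow !expr1 exprMn.
Qed.

Lemma modpoly_monic : f \is monic.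
Proof. by rewrite monicXnsubC // muln_gt0. Qed.

Lemma size_modpoly : size f = (4 * N).+1.
Proof. by rewrite size_XnsubC // muln_gt0. Qed.

Let size_modpoly_gt1 : (1 < size f)%N.
Proof. by rewrite size_modpoly ltnS muln_gt0. Qed.

Lemma size_gpow i j : size (gpow gamma i j) = (2 * (i + j)).+1.
Proof.
have size_gpolyX u n : size (gpoly u ^+ n) = (2 * n).+1.
  rewrite -[LHS]prednK ?size_exp ?size_gpoly // size_poly_gt0 expf_neq0 //.
  by rewrite -size_poly_gt0 size_gpoly.
rewrite size_mul ?size_gpolyX //; first lia.
all: by rewrite -size_poly_gt0 size_gpolyX.
Qed.

Lemma dvdp_gpow i j k l :
  (gpow gamma i j %| gpow gamma k l) = (i <= k)%N && (j <= l)%N.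
Proof. by rewrite dvdp_coprime_expM ?coprimep_gpolyN ?size_gpoly. Qed.

Lemma gpow_dvdp_modpoly i j : (i <= N)%N -> (j <= N)%N -> gpow gamma i j %| f.
Proof. by move=> iN jN; rewrite modpoly_gpow dvdp_gpow iN. Qed.

Lemma subset_gideal i j k l : (i <= N)%N -> (j <= N)%N -> (k <= N)%N -> (l <= N)%N ->
  (gideal i j \subset gideal k l) = (k <= i)%N && (l <= j)%N.
Proof.
by move=> *; rewrite subset_pideal_qpoly ?modpoly_monic ?gpow_dvdp_modpoly ?dvdp_gpow.
Qed.

Lemma mem_gideal i j k l : (i <= N)%N -> (j <= N)%N ->
  (in_qpoly f (gpow gamma k l) \in gideal i j) = (i <= k)%N && (j <= l)%N.
Proof.
move=> iN jN; rewrite mem_pideal_qpoly ?modpoly_monic ?gpow_dvdp_modpoly //.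
by rewrite val_in_qpoly ?modpoly_monic // -dvdp_mod ?gpow_dvdp_modpoly ?dvdp_gpow.
Qed.

Lemma gideal00 : gideal 0 0 = [set: S].
Proof. by rewrite /gideal /gpow !expr0 mulr1 in_qpoly1 pideal1. Qed.

Lemma card_gideal i j : (i <= N)%N -> (j <= N)%N ->
  #|gideal i j| = (#|F| ^ (4 * N - 2 * i - 2 * j))%N.
Proof.
move=> iN jN; rewrite card_pideal_qpoly ?modpoly_monic ?gpow_dvdp_modpoly //.
by rewrite size_modpoly size_gpow subSS mulnDr subnDA.
Qed.

Lemma is_ideal_gidealP (I : {set S}) : is_ideal I <->
  exists i j, [/\ (i <= N)%N, (j <= N)%N & I = gideal i j].
Proof.
split=> [|[i [j [_ _ ->]]]]; last exact: pideal_is_ideal.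
case/ideal_qpoly_principal => [||d df ->]; rewrite ?modpoly_monic //.
have d_dvd_gpow : d %| gpow gamma N N by rewrite -modpoly_gpow.
have [i [j [iN jN dE]]] :=
  dvdp_irreducible_exp2_eqp gpoly_gamma_irr gpoly_Ngamma_irr d_dvd_gpow.
exists i, j; split => //.
apply/eqP; rewrite eqEsubset !subset_pideal_qpoly ?modpoly_monic ?gpow_dvdp_modpoly //.
  by rewrite -(eqp_dvdr _ dE) -(eqp_dvdl _ dE) !dvdpp.
all: by rewrite (eqp_dvdl _ dE) gpow_dvdp_modpoly.
Qed.

Lemma mem1_gideal i j : (i <= N)%N -> (j <= N)%N ->
  ((1 : S) \in gideal i j) = (i == 0%N) && (j == 0%N).
Proof.
have -> : (1 : S) = in_qpoly f (gpow gamma 0 0) by rewrite /gpow !expr0 mulr1 in_qpoly1.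
by move=> iN jN; rewrite mem_gideal // !leqn0.
Qed.

Lemma gideal10_neq01 : gideal 1 0 != gideal 0 1.
Proof. by apply/negP => /eqP e; have := subxx (gideal 1 0); rewrite {2}e subset_gideal. Qed.

Lemma is_maximal_gideal a b : (a + b = 1)%N -> is_maximal_ideal (gideal a b).
Proof.
move=> ab; have aN : (a <= N)%N by lia.
have bN : (b <= N)%N by lia.
split; first exact: pideal_is_ideal.
split; first by rewrite mem1_gideal //; lia.
move=> J /is_ideal_gidealP[k [l [kN lN ->]]]; rewrite subset_gideal // => /andP[ka lb].
have [[-> ->]|[-> ->]] : (k = a /\ l = b) \/ (k = 0 /\ l = 0)%N by lia.
  by left.
by right; rewrite gideal00.
Qed.

Lemma is_maximal_gidealP (I : {set S}) :
  is_maximal_ideal I <-> I = gideal 1 0 \/ I = gideal 0 1.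
Proof.
split=> [[/is_ideal_gidealP[i [j [iN jN ->]]] [I1 Imax]]|]; last first.
  by case=> ->; apply: is_maximal_gideal.
rewrite mem1_gideal // in I1.
have max_ab a b : (a + b = 1)%N -> (a <= i)%N -> (b <= j)%N -> gideal i j = gideal a b.
  move=> ab ai bj; have aN : (a <= N)%N by lia.
  have bN : (b <= N)%N by lia.
  have [||abT] := Imax (gideal a b) (pideal_is_ideal _); first by rewrite subset_gideal ?ai.
    by move->.
  by have := in_setT (1 : S); rewrite -abT mem1_gideal //; lia.
by have [i0|i_gt0] := posnP i; [right|left]; apply: max_ab => //; lia.
Qed.

Lemma nilpotent_gidealP (z : S) : nilpotent z <-> z \in gideal 1 1.
Proof.
have gpow10 : gpow gamma 1 0 = gpoly gamma by rewrite /gpow expr1 expr0 mulr1.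
have gpow01 : gpow gamma 0 1 = gpoly (- gamma) by rewrite /gpow expr1 expr0 mul1r.
rewrite mem_pideal_qpoly ?modpoly_monic ?gpow_dvdp_modpoly //; split=> [[n zn]|zE].
  have f_dvd : f %| val z ^+ n by apply/modp_eq0P; rewrite -val_qpolyX ?modpoly_monic // zn.
  have g_dvd u : (u == gamma) || (u == - gamma) -> gpoly u %| val z.
    case/orP=> /eqP->; apply: (irreducible_dvdp_exp _ (dvdp_trans _ f_dvd)) => //.
      by rewrite -gpow10 gpow_dvdp_modpoly.
    by rewrite -gpow01 gpow_dvdp_modpoly.
  by rewrite /gpow !expr1 Gauss_dvdp ?coprimep_gpolyN ?g_dvd ?eqxx ?orbT.
exists N; apply: val_inj; rewrite val_qpolyX ?modpoly_monic //; apply/modp_eq0P.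
by rewrite -(divpK zE) exprMn gpow11 (modpoly_frobenius pchar_F alpha0_frob) dvdp_mull.
Qed.

Lemma nonunit_gidealP (z : S) :
  z \isn't a GRing.unit <-> z \in gideal 1 0 :|: gideal 0 1.
Proof.
rewrite qpoly_unitE ?modpoly_monic // in_setU.
rewrite !mem_pideal_qpoly ?modpoly_monic ?gpow_dvdp_modpoly //.
have -> : coprimep f (val z) = coprimep (gpow gamma N N) (val z) by rewrite -modpoly_gpow.
rewrite /gpow !expr1 !expr0 mulr1 mul1r coprimepMl !coprimep_pexpl //.
by rewrite !irreducible_poly_coprime // negb_and !negbK.
Qed.

End ModularRing.

End QuadraticFactors.

Theorem proposition3p4 (F : finFieldType) (p m s : nat)
  (alpha alpha0 gamma : F) :
  prime p -> odd p -> (0 < m)%N -> (0 < s)%N ->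
  #|F| = (p ^ m)%N -> (p ^ m %% 4 = 3)%N ->
  alpha != 0 -> ~ (exists b : F, b ^+ 2 = alpha) ->
  alpha0 ^+ (p ^ s) = alpha ->
  gamma ^+ 4 + 4%:R * alpha0 = 0 ->
  let f := modpoly p s alpha in
  let g1 : fqpoly f :=
    in_qpoly f ('X^2 + gamma *: 'X + (gamma ^+ 2 / 2%:R)%:P) in
  let g2 : fqpoly f :=
    in_qpoly f ('X^2 - gamma *: 'X + (gamma ^+ 2 / 2%:R)%:P) in
  [/\ (pideal g1 != pideal g2 /\
       forall I : {set fqpoly f},
         is_maximal_ideal I <-> (I = pideal g1 \/ I = pideal g2)),
      (forall I : {set fqpoly f},
         is_ideal I <->
         exists i j : nat, [/\ (i <= p ^ s)%N, (j <= p ^ s)%N &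
                              I = pideal (g1 ^+ i * g2 ^+ j)]) /\
      (forall i j : nat, (i <= p ^ s)%N -> (j <= p ^ s)%N ->
         #|pideal (g1 ^+ i * g2 ^+ j)| = (p ^ (m * (4 * p ^ s - 2 * i - 2 * j)))%N),
      (forall z : fqpoly f,
         nilpotent z <-> z \in pideal (in_qpoly f ('X^4 - alpha0%:P) : fqpoly f))
    & (forall z : fqpoly f,
         z \isn't a GRing.unit <-> z \in pideal g1 :|: pideal g2)].
Proof.
move=> p_prime _ _ _ cardF cardF_mod4 alpha_neq0 _ alpha0_frob gamma4 f g1 g2.
have card_F_mod4 : (#|F| %% 4 = 3)%N by rewrite cardF.
have pchar_F : p \in [pchar F] := card_finPcharP cardF p_prime.
have gE i j : pideal (g1 ^+ i * g2 ^+ j) = gideal p s alpha gamma i j.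
  by rewrite -!rmorphXn -rmorphM /gideal /gpow /gpoly scaleNr sqrrN.
have [g1E g2E] : pideal g1 = gideal p s alpha gamma 1 0
                 /\ pideal g2 = gideal p s alpha gamma 0 1.
  by rewrite -!gE !expr1 !expr0 mulr1 mul1r.
rewrite g1E g2E; split.
- split; first exact (gideal10_neq01 card_F_mod4 pchar_F alpha_neq0 alpha0_frob gamma4).
  exact (is_maximal_gidealP card_F_mod4 pchar_F alpha_neq0 alpha0_frob gamma4).
- split=> [I|i j iN jN]; last first.
    by rewrite gE (card_gideal card_F_mod4 pchar_F alpha_neq0 alpha0_frob) // cardF -expnM.
  rewrite (is_ideal_gidealP card_F_mod4 pchar_F alpha_neq0 alpha0_frob gamma4).
  by split=> -[i [j [iN jN ->]]]; exists i, j; rewrite gE.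
- move=> z; rewrite -(gpow11 card_F_mod4 gamma4).
  exact (nilpotent_gidealP card_F_mod4 pchar_F alpha_neq0 alpha0_frob gamma4 z).
- exact (nonunit_gidealP card_F_mod4 pchar_F alpha_neq0 alpha0_frob gamma4).
Qed.
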